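(* Suppose $X$ has a $\chi^2$ distribution with $\ell$ degrees of freedom, where $\ell\ge3$. Then for every $0<t<\ell-2$, \[ P(X\le t)\le P(X\ge 2\ell-4-t). \] *)

From HB Require Import structures.
From mathcomp Require Import all_boot all_order all_algebra.
From mathcomp Require Import all_classical all_reals all_analysis.
Set Implicit Arguments. Unset Strict Implicit. Unset Printing Implicit Defensive.
Import Order.TTheory GRing.Theory Num.Theory.
Local Open Scope classical_set_scope.
Local Open Scope ring_scope.

Definition chi2_kernel {R : realType} (l : nat) (x : R) : R :=
  if 0 < x then x `^ (l%:R / 2 - 1) * expR (- x / 2) else 0.

(* Normalizing constant: int_0^oo x^(l/2-1) e^(-x/2) dx  (= 2^(l/2) Gamma(l/2)). *)
Definition chi2_const {R : realType} (l : nat) : R :=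
  fine (\int[lebesgue_measure]_(x in [set: R]) (chi2_kernel l x)%:E)%E.

Definition chi2_pdf {R : realType} (l : nat) (x : R) : R :=
  chi2_kernel l x / chi2_const l.

Definition has_chi2_law {d} {T : measurableType d} {R : realType}
  (P : probability T R) (X : {RV P >-> R}) (l : nat) : Prop :=
  forall A : set R, measurable A ->
    P (X @^-1` A) = (\int[lebesgue_measure]_(x in A) (chi2_pdf l x)%:E)%E.

From HB Require Import structures.
From mathcomp Require Import all_boot all_order all_algebra.
From mathcomp Require Import all_classical all_reals all_analysis.
From mathcomp Require Import measurable_realfun.
From mathcomp Require Import ring lra.
Import Order.TTheory GRing.Theory Num.Theory.
Local Open Scope classical_set_scope.
Local Open Scope ring_scope.

(* Write m := l - 2 for the mode of the chi-square density f.  The reflection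
   x |-> 2m - x preserves Lebesgue measure and maps ]-oo, t] onto
   [2m - t, +oo[, so it suffices to show f (m - s) <= f (m + s) for
   0 <= s < m.  With u := s/m and f x ~ x^(m/2) e^(-x/2) this is the m/2-th
   power of (1 - u) e^(2u) <= 1 + u, i.e. of
   (1 - u) e^u <= (1 + u) e^(-u), whose difference vanishes at 0 and has
   derivative u (e^u - e^(-u)) >= 0. *)

Section chi2_kernel_comparison.
Context {R : realType}.

Let odd_gap (u : R) := (1 + u) * expR (- u) - (1 - u) * expR u.

Let is_derive_odd_gap (x : R) :
  is_derive x 1 odd_gap (x * (expR x - expR (- x))).
Proof. by rewrite /odd_gap; apply: is_derive_eq; rewrite /GRing.scale /=; ring. Qed.

Lemma onem_mul_expR_le (u : R) : 0 <= u -> (1 - u) * expR u <= (1 + u) * expR (- u).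
Proof.
move=> u0; rewrite -subr_ge0 -/(odd_gap u).
have -> : 0 = odd_gap 0 by rewrite /odd_gap oppr0 expR0; ring.
have dgap x : derivable odd_gap x 1.
  exact: (@ex_derive _ _ _ _ _ _ _ (is_derive_odd_gap x)).
apply: (@ger0_derive1_ndecry _ odd_gap 0) => //.
- move=> x; rewrite in_itv /= andbT => x0.
  rewrite derive1E (@derive_val _ _ _ _ _ _ _ (is_derive_odd_gap x)).
  by apply: mulr_ge0; [exact: ltW | rewrite subr_ge0 ler_expR; lra].
- by apply: derivable_within_continuous => x _.
Qed.

Lemma mulr_expR2_le (u : R) : 0 <= u -> (1 - u) * expR (2 * u) <= 1 + u.
Proof.
move=> u0; have eu := expR_gt0 u.
have e2u : expR (2 * u) = expR u * expR u by rewrite -expRD mulr2n mulrDl mul1r.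
have eNu : expR (- u) * expR u = 1 by rewrite -expRD addNr expR0.
have -> : 1 + u = (1 + u) * expR (- u) * expR u by rewrite -mulrA eNu mulr1.
rewrite e2u mulrA.
by apply: ler_wpM2r; [exact: ltW | exact: onem_mul_expR_le].
Qed.

Lemma powR_mul_expR_mode_le (m s : R) : 0 < m -> 0 <= s < m ->
  (m - s) `^ (m / 2) * expR (- (m - s) / 2) <=
  (m + s) `^ (m / 2) * expR (- (m + s) / 2).
Proof.
move=> m0 /andP[s0 sm].
have base : (m - s) * expR (2 * (s / m)) <= m + s.
  rewrite (_ : m - s = m * (1 - s / m)); last by field; lra.
  rewrite (_ : m + s = m * (1 + s / m)); last by field; lra.
  by rewrite -mulrA ler_pM2l // mulr_expR2_le // divr_ge0 // ltW.
have pow_base : ((m - s) * expR (2 * (s / m))) `^ (m / 2) <= (m + s) `^ (m / 2).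
  apply: ge0_ler_powR => //; rewrite ?nnegrE; [lra | | lra].
  by apply: mulr_ge0; [lra | exact: expR_ge0].
rewrite powRM -?expRM in pow_base; [|lra|exact: expR_ge0].
rewrite (_ : 2 * (s / m) * (m / 2) = s) in pow_base; last by field; lra.
rewrite (_ : - (m - s) / 2 = s + - (m + s) / 2); last by field.
by rewrite expRD mulrA ler_wpM2r // expR_ge0.
Qed.

Lemma chi2_kernel_ge0 (l : nat) (x : R) : 0 <= chi2_kernel l x.
Proof.
rewrite /chi2_kernel; case: ifP => // _.
by apply: mulr_ge0; [exact: powR_ge0 | exact: expR_ge0].
Qed.

Lemma chi2_kernel_reflect_le (l : nat) (x : R) : (3 <= l)%N ->
  l%:R - 2 <= x -> chi2_kernel l (2 * (l%:R - 2) - x) <= chi2_kernel l x.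
Proof.
move=> l3 hx; set m := l%:R - 2 in hx *.
have m0 : 0 < m by rewrite /m subr_gt0 ltr_nat.
rewrite /chi2_kernel; case: ifP => [pos|_]; last exact: chi2_kernel_ge0.
rewrite ifT; last by lra.
have -> : l%:R / 2 - 1 = m / 2 by rewrite /m; field.
have := @powR_mul_expR_mode_le m (x - m) m0.
have -> : m + (x - m) = x by ring.
have -> : m - (x - m) = 2 * m - x by ring.
by apply; lra.
Qed.

End chi2_kernel_comparison.

Section reflection.
Context {R : realType}.
Local Notation mu := (@lebesgue_measure R).

Lemma measurable_subr (c : R) : measurable_fun [set: R] (fun x : R => c - x).
Proof.
have -> : (fun x : R => c - x) = cst c \- id by [].
by apply: measurable_realfun.measurable_funB; [exact: measurable_cst | exact: measurable_id].
Qed.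

Let reflected_lebesgue (c : R) :=
  @measure_function_pushforward__canonical__measure_function_Measure _ _
    (measurableTypeR R) (measurableTypeR R) R mu _ (measurable_subr c).

Lemma lebesgue_measure_reflect (c : R) (A : set R) : measurable A ->
  pushforward mu (fun x : R => c - x) A = mu A.
Proof.
move=> mA; apply/esym; apply: (@lebesgue_measure_unique R (reflected_lebesgue c) _ A mA).
move=> _ [[a b]] _ <- /=.
rewrite /pushforward.
have -> : (fun x : R => c - x) @^-1` `]a, b] = `[c - b, c - a[%classic.
  by apply/seteqP; split => x; rewrite /preimage /= !in_itv /= => /andP[? ?];
    apply/andP; split; lra.
rewrite !lebesgue_measure_itv /= !lte_fin ltrD2l ltrN2.
by case: ifP => // _; rewrite -EFinD; congr EFin; ring.
Qed.

Local Open Scope ereal_scope.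

Lemma ge0_integral_reflect (c : R) (D : set R) (g : R -> \bar R) :
  measurable D -> measurable_fun D g -> (forall x, D x -> 0 <= g x) ->
  \int[mu]_(x in D) g x =
  \int[mu]_(x in (fun x => c - x)%R @^-1` D) g (c - x)%R.
Proof.
move=> mD mg g0.
rewrite -(@ge0_integral_pushforward _ _ (measurableTypeR R) (measurableTypeR R)
  R _ (measurable_subr c) mu D g mD mg); last by move=> y /[!inE]; exact: g0.
apply: (eq_measure_integral (reflected_lebesgue c)) => A mA _.
exact/esym/lebesgue_measure_reflect.
Qed.

Lemma ge0_integral_reflect_tail_le (f : R -> R) (c t : R) :
  measurable_fun [set: R] f -> (forall x, (0 <= f x)%R) ->
  (forall x, (c - t <= x)%R -> (f (c - x) <= f x)%R) ->
  \int[mu]_(x in `]-oo, t]) (f x)%:E <= \int[mu]_(x in `[(c - t)%R, +oo[) (f x)%:E.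
Proof.
move=> mf f0 fle.
rewrite (ge0_integral_reflect c) //; last 2 first.
- exact/measurable_EFinP/measurable_funTS.
- by move=> x _; rewrite lee_fin.
have -> : (fun x => c - x)%R @^-1` `]-oo, t] = `[(c - t)%R, +oo[%classic.
  by apply/seteqP; split => x; rewrite /preimage /= !in_itv /= andbT => ?; lra.
apply: ge0_le_integral => //.
- by move=> x _; rewrite lee_fin.
- apply/measurable_EFinP/measurable_funTS.
  exact: measurableT_comp mf (measurable_subr c).
- exact/measurable_EFinP/measurable_funTS.
- by move=> x; rewrite /= in_itv /= andbT lee_fin => /fle.
Qed.

End reflection.

Section chi2_density.
Context {R : realType}.

Lemma measurable_chi2_kernel (l : nat) : measurable_fun [set: R] (chi2_kernel l).
Proof.
apply: measurable_fun_ifT.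
- by apply: measurable_fun_ltr; [exact: measurable_cst | exact: measurable_id].
- apply: measurable_funM; first exact: measurable_powR.
  apply: measurableT_comp; first exact: measurable_expR.
  have -> : (fun x : R => - x / 2) = ( *%R^~ 2^-1) \o -%R by [].
  by apply: measurableT_comp; [exact: mulrr_measurable | exact: oppr_measurable].
- exact: measurable_cst.
Qed.

Lemma measurable_chi2_pdf (l : nat) : measurable_fun [set: R] (chi2_pdf l).
Proof. exact: measurable_funM (measurable_chi2_kernel l) (measurable_cst _). Qed.

Lemma chi2_const_ge0 (l : nat) : 0 <= chi2_const l :> R.
Proof.
apply: fine_ge0; apply: integral_ge0 => x _.
by rewrite lee_fin; exact: chi2_kernel_ge0.
Qed.

Lemma chi2_pdf_ge0 (l : nat) (x : R) : 0 <= chi2_pdf l x.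
Proof. exact: divr_ge0 (chi2_kernel_ge0 l x) (chi2_const_ge0 l). Qed.

Lemma chi2_pdf_reflect_le (l : nat) (x : R) : (3 <= l)%N ->
  l%:R - 2 <= x -> chi2_pdf l (2 * (l%:R - 2) - x) <= chi2_pdf l x.
Proof.
move=> l3 hx; apply: ler_wpM2r; first by rewrite invr_ge0 chi2_const_ge0.
exact: chi2_kernel_reflect_le.
Qed.

End chi2_density.

Theorem lemma2 (d : measure_display) (T : measurableType d) (R : realType)
  (P : probability T R) (X : {RV P >-> R}) (l : nat) (t : R) :
  (3 <= l)%N -> has_chi2_law X l ->
  0 < t -> t < l%:R - 2 ->
  (P [set w | (X w <= t)%R] <= P [set w | ((2 * l%:R - 4 - t) <= X w)%R])%E.
Proof.
move=> l3 HX _ tm.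
have -> : 2 * l%:R - 4 - t = 2 * (l%:R - 2) - t by ring.
have -> : [set w | X w <= t] = X @^-1` `]-oo, t]%classic.
  by apply/seteqP; split => w; rewrite /preimage /= in_itv.
have -> : [set w | 2 * (l%:R - 2) - t <= X w] =
    X @^-1` `[2 * (l%:R - 2) - t, +oo[%classic.
  by apply/seteqP; split => w; rewrite /preimage /= in_itv /= andbT.
rewrite !HX //; apply: ge0_integral_reflect_tail_le.
- exact: measurable_chi2_pdf.
- exact: chi2_pdf_ge0.
- by move=> x hx; apply: chi2_pdf_reflect_le => //; lra.
Qed.
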